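(* For each of the four boundary points of $P_2$ — top-left (NW), top-right (NE), bottom-left (SW), bottom-right (SE) — let $\beta_{\mathrm{NW}},\beta_{\mathrm{NE}},\beta_{\mathrm{SW}},\beta_{\mathrm{SE}}:P_2\to P_2$ be the chain map obtained by stacking on $P_2$ (above it for NW, NE; below it for SW, SE) the identity cobordism of $\mathbb 1$ with a single dot on the strand ending at that boundary point. These are chain maps, and $$\beta_{\mathrm{NW}}\simeq\beta_{\mathrm{SW}}\simeq-\beta_{\mathrm{NE}}\simeq-\beta_{\mathrm{SE}}$$ (chain homotopic), where $\beta_{\mathrm{NW}}$ is the map $b$ (dot on the left strand on $C_0$ and $x_{\mathrm{top}}$ on each $C_n$, $n\ge1$).
   Context: $P_2\in\mathrm{Kom}(2)$ is the complex with $C_0=\mathbb 1$, $C_n=q^{2n-1}e_1$ ($n\ge1$, homological degree $n$), $d_0=s$, $d_n=x_{\mathrm{top}}-x_{\mathrm{bot}}$ ($n$ odd), $d_n=x_{\mathrm{top}}+x_{\mathrm{bot}}$ ($n\ge2$ even), in Bar-Natan's dotted cobordism category over $\mathbb Z[\alpha]$ (relations: sphere $=0$, one-dotted sphere $=1$, two-dotted sphere $=0$, three-dotted sphere $=\alpha$, neck-cutting: a cylinder equals the sum of the two compressions with a dot on one side or the other). $\mathbb 1$ = two vertical strands, $e_1$ = cap over cup, $s$ the saddle, $x_{\mathrm{top}},x_{\mathrm{bot}}$ the dotted identities on the top/bottom arc of $e_1$. *)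

From HB Require Import structures.
From mathcomp Require Import all_boot all_order all_algebra.
Set Implicit Arguments. Unset Strict Implicit. Unset Printing Implicit Defensive.
Import GRing.Theory.
Local Open Scope ring_scope.

(* Concrete model of the full subcategory of Bar-Natan's dotted cobordism    *)
(* category (4 boundary points) on the two crossingless matchings 1 and e_1, *)
(* over Z[alpha] with: sphere = 0, 1-dot sphere = 1, 2-dot sphere = 0,       *)
(* 3-dot sphere = alpha, neck-cutting  tube = (dot one side) + (dot other).   *)
(* These relations give: a dot squared equals alpha; Hom(1,1) and            *)
(* Hom(e1,e1) are free over Z[alpha] on {id, x1, x2, x1 x2}; Hom(1,e1) and   *)
(* Hom(e1,1) are free on {saddle, dotted saddle}.                            *)

Definition R : Type := {poly int}.
Definition alpha : R := 'X.

(* A = Z[alpha][x]/(x^2 - alpha): element a0 + a1 x  (dots on a connected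
   component). *)
Record A := mkA { a0 : R; a1 : R }.
Definition Amul (u v : A) : A :=
  mkA (a0 u * a0 v + alpha * (a1 u * a1 v)) (a0 u * a1 v + a1 u * a0 v).
Definition Aadd (u v : A) : A := mkA (a0 u + a0 v) (a1 u + a1 v).
Definition Aopp (u : A) : A := mkA (- a0 u) (- a1 u).
Definition Azero : A := mkA 0 0.

(* A (x) A : element c00 + c10 x1 + c01 x2 + c11 x1 x2, x1^2 = x2^2 = alpha.
   For the object 1 (two vertical strands): x1 = dot on the left strand,
   x2 = dot on the right strand.
   For the object e_1 : x1 = dot on the top arc (x_top),
   x2 = dot on the bottom arc (x_bot). *)
Record AA := mkAA { c00 : R; c10 : R; c01 : R; c11 : R }.
Definition AAmul (u v : AA) : AA :=
  mkAA (c00 u * c00 v + alpha * (c10 u * c10 v) + alpha * (c01 u * c01 v)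
          + alpha * alpha * (c11 u * c11 v))
       (c00 u * c10 v + c10 u * c00 v + alpha * (c01 u * c11 v)
          + alpha * (c11 u * c01 v))
       (c00 u * c01 v + c01 u * c00 v + alpha * (c10 u * c11 v)
          + alpha * (c11 u * c10 v))
       (c00 u * c11 v + c11 u * c00 v + c10 u * c01 v + c01 u * c10 v).
Definition AAadd (u v : AA) : AA :=
  mkAA (c00 u + c00 v) (c10 u + c10 v) (c01 u + c01 v) (c11 u + c11 v).
Definition AAopp (u : AA) : AA := mkAA (- c00 u) (- c10 u) (- c01 u) (- c11 u).
Definition AAzero : AA := mkAA 0 0 0 0.
Definition AAone : AA := mkAA 1 0 0 0.

(* Dots slide onto a (connected) saddle: x1, x2 |-> x. *)
Definition mu (u : AA) : A := mkA (c00 u + alpha * c11 u) (c10 u + c01 u).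
(* A dot on the tube surface, placed on the first sheet. *)
Definition iota (u : A) : AA := mkAA (a0 u) (a1 u) 0 0.
(* Neck-cutting of the tube obtained by composing two saddles: x1 + x2. *)
Definition tube : AA := mkAA 0 1 1 0.

(* Objects: 1 = two vertical strands, e_1 = cap over cup. *)
Inductive obj := One | E1.

(* Hom(1,1), Hom(e1,e1) = A(x)A ; Hom(1,e1) = A.s ; Hom(e1,1) = A.s'. *)
Definition Hom (a b : obj) : Type :=
  match a, b with
  | One, One => AA
  | E1, E1 => AA
  | _, _ => A
  end.

(* Composition  comp g f = g o f  (f first). *)
Definition comp (a b c : obj) : Hom b c -> Hom a b -> Hom a c :=
  match a, b, c return Hom b c -> Hom a b -> Hom a c with
  | One, One, One => fun g f => AAmul g f
  | One, One, E1  => fun g f => Amul g (mu f)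
  | One, E1, One  => fun g f => AAmul (iota (Amul g f)) tube
  | One, E1, E1   => fun g f => Amul (mu g) f
  | E1, One, One  => fun g f => Amul (mu g) f
  | E1, One, E1   => fun g f => AAmul (iota (Amul g f)) tube
  | E1, E1, One   => fun g f => Amul g (mu f)
  | E1, E1, E1    => fun g f => AAmul g f
  end.

Definition Hadd (a b : obj) : Hom a b -> Hom a b -> Hom a b :=
  match a, b return Hom a b -> Hom a b -> Hom a b with
  | One, One => AAadd | E1, E1 => AAadd | One, E1 => Aadd | E1, One => Aadd
  end.
Definition Hopp (a b : obj) : Hom a b -> Hom a b :=
  match a, b return Hom a b -> Hom a b with
  | One, One => AAopp | E1, E1 => AAopp | One, E1 => Aopp | E1, One => Aopp
  end.
Definition Hzero (a b : obj) : Hom a b :=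
  match a, b return Hom a b with
  | One, One => AAzero | E1, E1 => AAzero | One, E1 => Azero | E1, One => Azero
  end.

Definition saddle : Hom One E1 := mkA 1 0.
Definition x_left : Hom One One := mkAA 0 1 0 0.
Definition x_right : Hom One One := mkAA 0 0 1 0.
Definition x_top : Hom E1 E1 := mkAA 0 1 0 0.
Definition x_bot : Hom E1 E1 := mkAA 0 0 1 0.

(* The complex P_2 : C_0 = 1, C_n = q^{2n-1} e_1 (n >= 1), d_n : C_n -> C_{n+1}. *)
(* (q-shifts are not tracked.)                                 *)
Definition Cobj (n : nat) : obj := if n is 0 then One else E1.

Definition P2d (n : nat) : Hom (Cobj n) (Cobj n.+1) :=
  match n return Hom (Cobj n) (Cobj n.+1) with
  | 0 => saddle
  | m.+1 => if odd m.+1 then Hadd x_top (Hopp x_bot) else Hadd x_top x_bot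
  end.

Definition P2map := forall n : nat, Hom (Cobj n) (Cobj n).

Definition is_chain_map (f : P2map) : Prop :=
  forall n, comp (P2d n) (f n) = comp (f n.+1) (P2d n).

Definition negmap (f : P2map) : P2map := fun n => Hopp (f n).

Definition homotopic (f g : P2map) : Prop :=
  exists h : forall n : nat, Hom (Cobj n.+1) (Cobj n),
    forall n,
      Hadd (f n) (Hopp (g n)) =
      Hadd (match n return Hom (Cobj n) (Cobj n) with
            | 0 => Hzero One One
            | m.+1 => comp (P2d m) (h m)
            end)
           (comp (h n) (P2d n)).

Inductive bpt := NW | NE | SW | SE.

(* Identity cobordism of an object with one dot on the component ending at
   boundary point p.  In 1 the left strand joins SW to NW and the right strand
   SE to NE; in e_1 the top arc joins NW to NE and the bottom arc SW to SE. *)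
Definition dot_at (p : bpt) (a : obj) : Hom a a :=
  match a return Hom a a with
  | One => match p with NW | SW => x_left | NE | SE => x_right end
  | E1 => match p with NW | NE => x_top | SW | SE => x_bot end
  end.

(* beta_p : stacking the dotted identity of 1 (dot on the strand ending at p)
   above (p = NW, NE) or below (p = SW, SE) P_2: since 1 is the identity
   tangle, on C_n this is the identity of C_n with a dot on the component of
   C_n ending at p. *)
Definition beta (p : bpt) : P2map := fun n => dot_at p (Cobj n).

Definition bmap : P2map := fun n =>
  match n return Hom (Cobj n) (Cobj n) with
  | 0 => x_left
  | _.+1 => x_top
  end.

From Pilot Require Import Defs.
From mathcomp Require Import all_boot all_order all_algebra.
From mathcomp Require Import ring.
Import GRing.Theory.
Local Open Scope ring_scope.

(* Dots commute with the differentials of P_2: on e_1 these are x_top -+ x_bot,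
   and a dot slides through the saddle d_0 to either arc.  On e_1 the maps
   beta_p differ by x_top - x_bot or x_top + x_bot, which is one of the two
   adjacent differentials, so identity homotopies in every other degree
   suffice; in degree 0, beta_SW + beta_NE = x_left + x_right is the tube
   s' s, which is absorbed by the reverse saddle s'. *)

(* [Defs.Hom] is qualified because vector.v also exports a [Hom]. *)
Definition idE1 : Defs.Hom E1 E1 := AAone.
Definition cosaddle : Defs.Hom E1 One := mkA 1 0.

Ltac hom_ring :=
  rewrite /Hadd /Hopp /Hzero /comp /AAmul /AAadd /AAopp /AAzero /AAone
    /Amul /Aadd /Aopp /Azero /mu /Defs.iota /tube /idE1 /cosaddle
    /x_top /x_bot /x_left /x_right /saddle;
  cbv beta iota; (congr mkAA || congr mkA); cbn [a0 a1 c00 c10 c01 c11]; ring.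

Lemma P2d_odd m : odd m.+1 -> P2d m.+1 = Hadd x_top (Hopp x_bot).
Proof. by rewrite /= => ->. Qed.

Lemma P2d_even m : ~~ odd m.+1 -> P2d m.+1 = Hadd x_top x_bot.
Proof. by move/negbTE; rewrite /= => ->. Qed.

Lemma beta_is_chain_map p : is_chain_map (beta p).
Proof.
case=> [|m]; first by case: p; rewrite /beta /=; hom_ring.
by case: (boolP (odd m.+1)) => [/P2d_odd|/P2d_even] ->;
  case: p; rewrite /beta /=; hom_ring.
Qed.

Lemma beta_NW_bmap n : beta NW n = bmap n.
Proof. by case: n. Qed.

Definition alt_homotopy (h0 : Defs.Hom E1 One) (h_odd h_even : Defs.Hom E1 E1) :
    forall n, Defs.Hom (Cobj n.+1) (Cobj n) :=
  fun n => match n return Defs.Hom (Cobj n.+1) (Cobj n) with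
           | 0 => h0
           | m.+1 => if odd m.+1 then h_odd else h_even
           end.

Lemma homotopic_NW_SW : homotopic (beta NW) (beta SW).
Proof.
exists (alt_homotopy (Hzero E1 One) idE1 (Hzero E1 E1)).
case=> [|[|m]]; rewrite /beta /alt_homotopy /=; [hom_ring | hom_ring |].
by rewrite !negbK; case: (odd m) => /=; hom_ring.
Qed.

Lemma homotopic_SW_negNE : homotopic (beta SW) (negmap (beta NE)).
Proof.
exists (alt_homotopy cosaddle (Hzero E1 E1) idE1).
case=> [|[|m]]; rewrite /beta /negmap /alt_homotopy /=; [hom_ring | hom_ring |].
by rewrite !negbK; case: (odd m) => /=; hom_ring.
Qed.

Lemma homotopic_negNE_negSE :
  homotopic (negmap (beta NE)) (negmap (beta SE)).
Proof.
exists (alt_homotopy (Hzero E1 One) (Hopp idE1) (Hzero E1 E1)).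
case=> [|[|m]]; rewrite /beta /negmap /alt_homotopy /=; [hom_ring | hom_ring |].
by rewrite !negbK; case: (odd m) => /=; hom_ring.
Qed.

Theorem mainTheorem9 :
  (forall p : bpt, is_chain_map (beta p)) /\
  (forall n, beta NW n = bmap n) /\
  homotopic (beta NW) (beta SW) /\
  homotopic (beta SW) (negmap (beta NE)) /\
  homotopic (negmap (beta NE)) (negmap (beta SE)).
Proof.
split; first exact: beta_is_chain_map.
split; first exact: beta_NW_bmap.
split; first exact: homotopic_NW_SW.
split; first exact: homotopic_SW_negNE.
exact: homotopic_negNE_negSE.
Qed.
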